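(* Let $V_1\subset\mathbb{R}^{d_1}$ and $V_2\subset\mathbb{R}^{d_2}$ be point configurations. Then $\mathrm{Th}(V_1\times V_2)=\max(\mathrm{Th}(V_1),\mathrm{Th}(V_2))$ and $\mathrm{Lev}(V_1\times V_2)=\max(\mathrm{Lev}(V_1),\mathrm{Lev}(V_2))$.
   Context: A point configuration is a finite set $V\subset\mathbb{R}^n$. A linear function means an affine function $\ell(x)=\delta-\langle c,x\rangle$. A linear function $\ell$ nonnegative on $V$ is $k$-sos with respect to $V$ if there are polynomials $h_1,\dots,h_s$ with $\deg h_i\le k$ and $\ell(v)=\sum_i h_i(v)^2$ for all $v\in V$. The Theta rank $\mathrm{Th}(V)$ is the smallest $k\ge0$ such that every linear function nonnegative on $V$ is $k$-sos with respect to $V$. For $\ell$ nonnegative on $V$, $\{v\in V:\ell(v)=0\}$ is a face of $V$; inclusion-maximal faces different from $V$ are facets and the corresponding $\ell$ facet-defining. $V$ is $k$-level if every facet-defining linear function takes at most $k$ distinct values on $V$; the levelness $\mathrm{Lev}(V)$ is the smallest such $k$. *)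

From HB Require Import structures.
From mathcomp Require Import all_boot all_order all_algebra.
From mathcomp Require Import finmap mpoly.
From mathcomp Require Import reals.
From Stdlib Require Import ClassicalEpsilon.

Set Implicit Arguments.
Unset Strict Implicit.
Unset Printing Implicit Defensive.

Import Order.TTheory GRing.Theory Num.Theory.
Local Open Scope ring_scope.
Local Open Scope fset_scope.

Section PointConfigurations.
Variable R : realType.

Definition pconf (n : nat) := {fset 'rV[R]_n}.

Definition linfun (n : nat) (delta : R) (c : 'rV[R]_n) (x : 'rV[R]_n) : R :=
  delta - \sum_(i < n) c 0 i * x 0 i.

Definition nonneg_on (n : nat) (V : pconf n) (delta : R) (c : 'rV[R]_n) : Prop :=
  forall v, v \in V -> 0 <= linfun delta c v.

Definition evalpt (n : nat) (p : {mpoly R[n]}) (v : 'rV[R]_n) : R :=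
  p.@[fun i => v 0 i].

(* l is k-sos w.r.t. V: l = sum of squares of polynomials of degree <= k on V.
   (msize p = 1 + total degree of p, and 0 for p = 0.) *)
Definition k_sos (n : nat) (V : pconf n) (k : nat) (delta : R) (c : 'rV[R]_n) : Prop :=
  exists hs : seq {mpoly R[n]},
    (forall h, h \in hs -> (msize h <= k.+1)%N) /\
    forall v, v \in V -> linfun delta c v = \sum_(h <- hs) (evalpt h v) ^+ 2.

Definition theta_le (n : nat) (V : pconf n) (k : nat) : Prop :=
  forall delta c, nonneg_on V delta c -> k_sos V k delta c.

Definition is_theta_rank (n : nat) (V : pconf n) (k : nat) : Prop :=
  theta_le V k /\ forall j, theta_le V j -> (k <= j)%N.

(* Th(V): the smallest such k (chosen by classical choice; it exists for every
   finite V). *)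
Definition theta_rank (n : nat) (V : pconf n) : nat :=
  epsilon (inhabits 0%N) (fun k => is_theta_rank V k).

Definition zero_set (n : nat) (V : pconf n) (delta : R) (c : 'rV[R]_n) : pconf n :=
  [fset v in V | linfun delta c v == 0].

Definition is_face (n : nat) (V : pconf n) (F : pconf n) : Prop :=
  exists delta c, nonneg_on V delta c /\ F = zero_set V delta c.

Definition is_facet (n : nat) (V : pconf n) (F : pconf n) : Prop :=
  [/\ is_face V F, F != V &
      forall G, is_face V G -> G != V -> F `<=` G -> G = F].

Definition facet_defining (n : nat) (V : pconf n) (delta : R) (c : 'rV[R]_n) : Prop :=
  nonneg_on V delta c /\ is_facet V (zero_set V delta c).

Definition k_level (n : nat) (V : pconf n) (k : nat) : Prop :=
  forall delta c, facet_defining V delta c ->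
    (#|` [fset linfun delta c v | v in V] | <= k)%N.

Definition is_levelness (n : nat) (V : pconf n) (k : nat) : Prop :=
  k_level V k /\ forall j, k_level V j -> (k <= j)%N.

Definition levelness (n : nat) (V : pconf n) : nat :=
  epsilon (inhabits 0%N) (fun k => is_levelness V k).

Definition prod_conf (d1 d2 : nat) (V1 : pconf d1) (V2 : pconf d2) : pconf (d1 + d2) :=
  [fset row_mx x y | x in V1, y in V2].

End PointConfigurations.

From Pilot Require Import Defs.
From HB Require Import structures.
From mathcomp Require Import all_boot all_order all_algebra.
From mathcomp Require Import finmap mpoly.
From mathcomp Require Import reals.
From Stdlib Require Import Classical ClassicalEpsilon.
From mathcomp Require Import zify ring lra.

(* Affine functions on [V1 x V2] are exactly the sums [l1(x) + l2(y)] of affine functions on the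
   factors.

   Theta rank: normalizing [l1] and [l2] to vanish somewhere on [V1] and [V2] leaves a
   nonnegative constant, so sos certificates of [l1] and [l2], pulled back along the two
   projections, add up to a certificate of [l] of degree [max k1 k2]. Conversely, restricting a
   certificate on [V1 x V2] to a slice [V1 x {y0}] certifies any affine function of [x].

   Levelness: a facet of [V1 x V2] is empty only when the configuration is a single point, and
   otherwise it is a cylinder [F1 x V2] or [V1 x F2] over a facet of a factor; the two
   facet-defining functions take the same values. Conversely facets of a factor lift to
   cylinders. *)

Set Implicit Arguments.
Unset Strict Implicit.
Unset Printing Implicit Defensive.

Import Order.TTheory GRing.Theory Num.Theory.
Local Open Scope ring_scope.

Section AffineSubstitution.
Variable R : realType.

Lemma msizeM_leq n (p q : {mpoly R[n]}) :
  (msize (p * q) <= (msize p + msize q).-1)%N.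
Proof.
have [->|nz_p] := eqVneq p 0; first by rewrite mul0r msize0.
have [->|nz_q] := eqVneq q 0; first by rewrite mulr0 msize0.
by rewrite msizeM.
Qed.

Lemma msizeX_leq n (p : {mpoly R[n]}) e :
  (msize p <= 2)%N -> (msize (p ^+ e) <= e.+1)%N.
Proof.
move=> p2; elim: e => [|e IHe]; first by rewrite expr0 msize1.
by rewrite exprS; apply: leq_trans (msizeM_leq _ _) _; lia.
Qed.

Lemma msize_comp_mpoly_le n k (lq : k.-tuple {mpoly R[n]}) (p : {mpoly R[k]}) :
  (forall i, msize (tnth lq i) <= 2)%N -> (msize (p \mPo lq) <= msize p)%N.
Proof.
move=> lq2; rewrite comp_mpolyE; apply: leq_trans (msize_sum _ _ _) _.
apply/bigmax_leqP_seq => m /msize_mdeg_lt m_p _.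
apply: leq_trans (msizeZ_le _ _) (leq_trans _ m_p); rewrite mdegE.
elim/big_rec2: _ => [|i d q _ IHq]; first by rewrite msize1.
apply: leq_trans (msizeM_leq _ _) _.
by have := msizeX_leq (m i) (lq2 i); lia.
Qed.

Definition affine_subst n k (A : 'M[R]_(n, k)) (b : 'rV[R]_k) : k.-tuple {mpoly R[n]} :=
  [tuple \sum_(j < n) A j i *: 'X_j + (b 0 i)%:MP | i < k].

Lemma msize_affine_subst n k (A : 'M[R]_(n, k)) b i :
  (msize (tnth (affine_subst A b) i) <= 2)%N.
Proof.
rewrite tnth_mktuple; apply: leq_trans (msizeD_le _ _) _.
rewrite geq_max msizeC; apply/andP; split; last by case: (_ != 0).
apply: leq_trans (msize_sum _ _ _) _.
apply/bigmax_leqP_seq => j _ _; apply: leq_trans (msizeZ_le _ _) _.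
by rewrite msizeX mdeg1.
Qed.

Lemma evalpt_comp_affine n k (A : 'M[R]_(n, k)) b (p : {mpoly R[k]}) v :
  evalpt (p \mPo affine_subst A b) v = evalpt p (v *m A + b).
Proof.
rewrite /evalpt comp_mpoly_meval; apply: meval_eq => i.
rewrite tnth_mktuple !mxE mevalD mevalC raddf_sum /=; congr (_ + _).
by apply: eq_bigr => j _; rewrite mevalZ mevalXU mulrC.
Qed.

Lemma msize_comp_affine n k (A : 'M[R]_(n, k)) b (p : {mpoly R[k]}) :
  (msize (p \mPo affine_subst A b) <= msize p)%N.
Proof. exact/msize_comp_mpoly_le/msize_affine_subst. Qed.

End AffineSubstitution.

Section SumsOfSquares.
Variable R : realType.

Definition sos_on n (V : pconf R n) (k : nat) (f : 'rV[R]_n -> R) : Prop :=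
  exists hs : seq {mpoly R[n]},
    (forall h, h \in hs -> (msize h <= k.+1)%N) /\
    forall v, v \in V -> f v = \sum_(h <- hs) (evalpt h v) ^+ 2.

Variables (n : nat) (V : pconf R n).

Lemma sos_on_eq k (f g : 'rV[R]_n -> R) :
  {in V, f =1 g} -> sos_on V k f -> sos_on V k g.
Proof. by move=> fg [hs [hs_k hsE]]; exists hs; split=> // v vV; rewrite -fg ?hsE. Qed.

Lemma sos_on_le k k' f : (k <= k')%N -> sos_on V k f -> sos_on V k' f.
Proof.
move=> kk' [hs [hs_k hsE]]; exists hs; split=> // h /hs_k.
by move/leq_trans; apply.
Qed.

Lemma sos_on_const k (a : R) : 0 <= a -> sos_on V k (fun=> a).
Proof.
move=> a_ge0; exists [:: (Num.sqrt a)%:MP]; split.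
  by move=> h; rewrite mem_seq1 => /eqP ->; rewrite msizeC; case: (_ != 0).
by move=> v _; rewrite big_seq1 /evalpt mevalC sqr_sqrtr.
Qed.

Lemma sos_onD k (f g : 'rV[R]_n -> R) :
  sos_on V k f -> sos_on V k g -> sos_on V k (fun v => f v + g v).
Proof.
move=> [hs [hs_k hsE]] [gs [gs_k gsE]]; exists (hs ++ gs); split.
  by move=> h; rewrite mem_cat => /orP[/hs_k|/gs_k].
by move=> v vV; rewrite big_cat /= hsE ?gsE.
Qed.

Lemma sos_on_comp_affine m (W : pconf R m) k (A : 'M[R]_(n, m)) b f :
  {in V, forall v, v *m A + b \in W} -> sos_on W k f ->
  sos_on V k (fun v => f (v *m A + b)).
Proof.
move=> VW [hs [hs_k hsE]].
exists [seq h \mPo affine_subst A b | h <- hs]; split.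
  by move=> _ /mapP[h /hs_k h_k ->]; apply: leq_trans (msize_comp_affine _ _ _) h_k.
by move=> v vV; rewrite big_map hsE ?VW //; under eq_bigr do rewrite evalpt_comp_affine.
Qed.

Definition separating_factor (v w : 'rV[R]_n) : {mpoly R[n]} :=
  if [pick i | v 0 i != w 0 i] is Some i
  then (v 0 i - w 0 i)^-1 *: ('X_i - (w 0 i)%:MP) else 1.

Definition lagrange_basis (v : 'rV[R]_n) : {mpoly R[n]} :=
  \prod_(w <- V | w != v) separating_factor v w.

Lemma separating_factor_l v w : evalpt (separating_factor v w) v = 1.
Proof.
rewrite /separating_factor /evalpt; case: pickP => [i vw_i|_]; last by rewrite meval1.
by rewrite mevalZ mevalB mevalXU mevalC mulVf // subr_eq0.
Qed.

Lemma separating_factor_r v w : v != w -> evalpt (separating_factor v w) w = 0.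
Proof.
move=> vw; rewrite /separating_factor /evalpt; case: pickP => [i _|same].
  by rewrite mevalZ mevalB mevalXU mevalC subrr mulr0.
by case/eqP: vw; apply/rowP => i; apply/eqP; apply/negbFE/same.
Qed.

Lemma lagrange_basisE v u : u \in V -> evalpt (lagrange_basis v) u = (u == v)%:R.
Proof.
move=> uV; rewrite /lagrange_basis /evalpt rmorph_prod /=.
have [->|uv] := eqVneq u v; first by apply: big1 => w _; apply: separating_factor_l.
apply/eqP; rewrite prodf_seq_eq0; apply/hasP; exists u => //.
by rewrite uv /= -/(evalpt _ _) separating_factor_r // eq_sym.
Qed.

(* [f] is the square of the polynomial interpolating [Num.sqrt \o f] on [V]. *)
Lemma sos_on_interpolation : exists k, forall f : 'rV[R]_n -> R,
  {in V, forall v, 0 <= f v} -> sos_on V k f.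
Proof.
exists (\max_(v <- V) msize (lagrange_basis v)) => f f_ge0.
exists [:: \sum_(v <- V) Num.sqrt (f v) *: lagrange_basis v]; split.
  move=> h; rewrite mem_seq1 => /eqP ->; apply: leq_trans (msize_sum _ _ _) (leqW _).
  apply/bigmax_leqP_seq => v vV _; apply: leq_trans (msizeZ_le _ _) _.
  exact: leq_bigmax_seq.
move=> u uV; rewrite big_seq1 /evalpt raddf_sum /= (bigD1_seq u) ?fset_uniq //=.
rewrite big1 => [|v vu]; rewrite mevalZ -/(evalpt _ _) lagrange_basisE //.
  by rewrite eqxx mulr1 addr0 sqr_sqrtr ?f_ge0.
by rewrite eq_sym (negbTE vu) mulr0.
Qed.

End SumsOfSquares.

(* [theta_rank V] and [levelness V] are [least_nat (theta_le V)] and [least_nat (k_level V)]. *)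
Definition least_nat (P : nat -> Prop) : nat :=
  epsilon (inhabits 0%N) (fun k => P k /\ forall j, P j -> (k <= j)%N).

Lemma least_natP (P : nat -> Prop) : (exists k, P k) ->
  P (least_nat P) /\ forall j, P j -> (least_nat P <= j)%N.
Proof.
case=> k Pk; apply: (epsilon_spec (inhabits 0%N) (fun k => P k /\ _)).
elim/ltn_ind: k Pk => k IHk Pk.
have [[j [jk Pj]]|no_smaller] := classic (exists j, (j < k)%N /\ P j).
  exact: IHk jk Pj.
exists k; split=> // j Pj; rewrite leqNgt; apply/negP => jk.
by apply: no_smaller; exists j.
Qed.

Lemma least_nat_eq (P : nat -> Prop) m :
  P m -> (forall j, P j -> (m <= j)%N) -> least_nat P = m.
Proof.
move=> Pm m_le; have [Pl l_le] := least_natP (ex_intro P m Pm).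
by apply/eqP; rewrite eqn_leq l_le ?m_le.
Qed.

Section FiniteSets.
Variable R : realType.
Local Open Scope fset_scope.

Lemma fset_argmin (T : choiceType) (V : {fset T}) (f : T -> R) :
  V != fset0 -> exists2 x, x \in V & {in V, forall y, f x <= f y}.
Proof.
case/fset0Pn => x0 x0V.
case: (@arg_minP _ _ V [` x0V] xpredT (fun y => f (val y))) => // x _ x_min.
by exists (val x) => [|y yV]; [exact: valP | exact: (x_min [` yV])].
Qed.

Definition fprod (T1 T2 T : choiceType) (phi : T1 -> T2 -> T)
    (V1 : {fset T1}) (V2 : {fset T2}) : {fset T} :=
  [fset phi x y | x in V1, y in V2].

Variables (T1 T2 T : choiceType) (phi : T1 -> T2 -> T).
Variables (V1 : {fset T1}) (V2 : {fset T2}).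

Lemma fprodP z :
  reflect (exists x y, [/\ x \in V1, y \in V2 & z = phi x y]) (z \in fprod phi V1 V2).
Proof.
apply: (iffP idP) => [/imfset2P[x xV [y yV ->]]|[x [y [xV yV ->]]]].
  by exists x, y.
exact: in_imfset2.
Qed.

Lemma mem_fprod x y : x \in V1 -> y \in V2 -> phi x y \in fprod phi V1 V2.
Proof. by move=> xV yV; apply/fprodP; exists x, y. Qed.

End FiniteSets.

Lemma fprod_swap (T1 T2 T : choiceType) (phi : T1 -> T2 -> T)
    (V1 : {fset T1}) (V2 : {fset T2}) : fprod (fun y x => phi x y) V2 V1 = fprod phi V1 V2.
Proof.
apply/fsetP => z; apply/fprodP/fprodP => [[y [x [yV xV ->]]]|[x [y [xV yV ->]]]].
  by exists x, y.
by exists y, x.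
Qed.


Section ThetaRank.
Variable R : realType.

Lemma linfunE n (delta : R) (c x : 'rV[R]_n) : Defs.linfun delta c x = delta + Defs.linfun 0 c x.
Proof. by rewrite /Defs.linfun add0r. Qed.

Lemma linfun0 n (x : 'rV[R]_n) : Defs.linfun 0 0 x = 0.
Proof. by rewrite /Defs.linfun big1 ?subr0 // => i _; rewrite mxE mul0r. Qed.

Lemma linfun_row_mx d1 d2 (delta : R) c1 c2 (x : 'rV[R]_d1) (y : 'rV[R]_d2) :
  Defs.linfun delta (row_mx c1 c2) (row_mx x y) = Defs.linfun delta c1 x + Defs.linfun 0 c2 y.
Proof.
rewrite /Defs.linfun big_split_ord /= sub0r opprD addrA.
by congr (_ - _ - _); apply: eq_bigr => i _; rewrite ?row_mxEl ?row_mxEr.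
Qed.

Lemma theta_le_exists n (V : pconf R n) : exists k, theta_le V k.
Proof.
have [k sos_k] := sos_on_interpolation V.
by exists k => delta c l_ge0; apply: sos_k.
Qed.

Variables (d1 d2 : nat) (V1 : pconf R d1) (V2 : pconf R d2).
Local Notation P := (prod_conf V1 V2).

Lemma theta_le_prod k1 k2 : V1 != fset0 -> V2 != fset0 ->
  theta_le V1 k1 -> theta_le V2 k2 -> theta_le P (maxn k1 k2).
Proof.
move=> V1_n0 V2_n0 th1 th2 delta c.
have [c1 [c2 ->]] : exists c1 c2, c = row_mx c1 c2.
  by exists (lsubmx c), (rsubmx c); rewrite hsubmxK.
move=> l_ge0.
have [x0 x0V min_x0] := fset_argmin (Defs.linfun 0 c1) V1_n0.
have [y0 y0V min_y0] := fset_argmin (Defs.linfun 0 c2) V2_n0.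
pose l1 := Defs.linfun (- Defs.linfun 0 c1 x0) c1.
pose l2 := Defs.linfun (- Defs.linfun 0 c2 y0) c2.
have sos1 : sos_on V1 k1 l1.
  by apply: th1 => x xV; rewrite linfunE addrC subr_ge0 min_x0.
have sos2 : sos_on V2 k2 l2.
  by apply: th2 => y yV; rewrite linfunE addrC subr_ge0 min_y0.
pose C := Defs.linfun delta (row_mx c1 c2) (row_mx x0 y0).
have C_ge0 : 0 <= C by apply/l_ge0/mem_fprod.
pose pr1 : 'M[R]_(d1 + d2, d1) := col_mx 1%:M 0.
pose pr2 : 'M[R]_(d1 + d2, d2) := col_mx 0 1%:M.
have pr1E x y : row_mx x y *m pr1 + 0 = x by rewrite mul_row_col mulmx1 mulmx0 !addr0.
have pr2E x y : row_mx x y *m pr2 + 0 = y by rewrite mul_row_col mulmx1 mulmx0 add0r addr0.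
have sos1P : sos_on P (maxn k1 k2) (fun z => l1 (z *m pr1 + 0)).
  apply: sos_on_comp_affine (sos_on_le (leq_maxl _ _) sos1).
  by move=> _ /fprodP[x [y [xV yV ->]]]; rewrite pr1E.
have sos2P : sos_on P (maxn k1 k2) (fun z => l2 (z *m pr2 + 0)).
  apply: sos_on_comp_affine (sos_on_le (leq_maxr _ _) sos2).
  by move=> _ /fprodP[x [y [xV yV ->]]]; rewrite pr2E.
apply: sos_on_eq (sos_onD (sos_onD (sos_on_const _ _ C_ge0) sos1P) sos2P).
move=> _ /fprodP[x [y [_ _ ->]]]; rewrite pr1E pr2E /l1 /l2 /C !linfun_row_mx.
by rewrite !(linfunE delta) !(linfunE (- _)); ring.
Qed.

Lemma theta_le_prod_l k : V2 != fset0 -> theta_le P k -> theta_le V1 k.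
Proof.
case/fset0Pn => y0 y0V thP delta c1 l_ge0.
have sosP : sos_on P k (Defs.linfun delta (row_mx c1 0)).
  apply: thP => _ /fprodP[x [y [xV _ ->]]].
  by rewrite linfun_row_mx linfun0 addr0 l_ge0.
have sliceE x : x *m row_mx 1%:M 0 + row_mx 0 y0 = row_mx x y0.
  by rewrite mul_mx_row mulmx1 mulmx0 add_row_mx addr0 add0r.
apply: sos_on_eq (sos_on_comp_affine (A := row_mx 1%:M 0) (b := row_mx 0 y0) _ sosP).
  by move=> x _; rewrite sliceE linfun_row_mx linfun0 addr0.
by move=> x xV; rewrite sliceE mem_fprod.
Qed.

Lemma theta_le_prod_r k : V1 != fset0 -> theta_le P k -> theta_le V2 k.
Proof.
case/fset0Pn => x0 x0V thP delta c2 l_ge0.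
have sosP : sos_on P k (Defs.linfun delta (row_mx 0 c2)).
  apply: thP => _ /fprodP[x [y [_ yV ->]]].
  by rewrite linfun_row_mx (linfunE delta 0) linfun0 addr0 -linfunE l_ge0.
have sliceE y : y *m row_mx 0 1%:M + row_mx x0 0 = row_mx x0 y.
  by rewrite mul_mx_row mulmx1 mulmx0 add_row_mx addr0 add0r.
apply: sos_on_eq (sos_on_comp_affine (A := row_mx 0 1%:M) (b := row_mx x0 0) _ sosP).
  by move=> y _; rewrite sliceE linfun_row_mx (linfunE delta 0) linfun0 addr0 -linfunE.
by move=> y yV; rewrite sliceE mem_fprod.
Qed.

Lemma theta_rank_prod : V1 != fset0 -> V2 != fset0 ->
  theta_rank P = maxn (theta_rank V1) (theta_rank V2).
Proof.
move=> V1_n0 V2_n0.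
have [th1 min1] := least_natP (theta_le_exists V1).
have [th2 min2] := least_natP (theta_le_exists V2).
apply: least_nat_eq; first exact: theta_le_prod.
move=> j thP; rewrite geq_max min1 ?min2 //.
  exact: theta_le_prod_r thP.
exact: theta_le_prod_l thP.
Qed.

End ThetaRank.

Section Faces.
Variables (R : realType) (T : choiceType) (Fam : (T -> R) -> Prop).
Local Open Scope fset_scope.

Definition zeros (V : {fset T}) (f : T -> R) : {fset T} := [fset v in V | f v == 0].
Definition nonneg (V : {fset T}) (f : T -> R) : Prop := {in V, forall v, 0 <= f v}.
Definition values (V : {fset T}) (f : T -> R) : {fset R} := [fset f v | v in V].

Definition face (V G : {fset T}) : Prop :=
  exists f, [/\ Fam f, nonneg V f & G = zeros V f].
Definition facet (V G : {fset T}) : Prop :=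
  [/\ face V G, G != V & forall G', face V G' -> G' != V -> G `<=` G' -> G' = G].
Definition facet_fun (V : {fset T}) (f : T -> R) : Prop :=
  [/\ Fam f, nonneg V f & facet V (zeros V f)].

Lemma zerosP (V : {fset T}) f v : reflect (v \in V /\ f v = 0) (v \in zeros V f).
Proof. by rewrite !inE; apply: (iffP andP) => [[-> /eqP]|[-> ->]]. Qed.

Lemma zeros_sub (V : {fset T}) f : zeros V f `<=` V.
Proof. by apply/fsubsetP => v /zerosP[]. Qed.

Lemma zeros0 (V : {fset T}) : zeros V (fun=> 0) = V.
Proof. by apply/fsetP => v; rewrite !inE eqxx andbT. Qed.

Lemma zeros_eqT (V : {fset T}) f : (zeros V f == V) = (zeros V (fun=> 0) `<=` zeros V f).
Proof. by rewrite zeros0 eqEfsubset zeros_sub. Qed.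

Lemma card_values_le (V : {fset T}) f : (#|` values V f| <= #|` V|)%N.
Proof. exact: leq_imfset_card. Qed.

Lemma values_eq0 (V : {fset T}) f : (values V f == fset0) = (V == fset0).
Proof.
apply/fset0Pn/fset0Pn => [[r /imfsetP[v vV _]]|[v vV]]; first by exists v.
by exists (f v); apply: in_imfset.
Qed.

Lemma card_values_le1 (V : {fset T}) f : {in V &, forall u w, u = w} -> (#|` values V f| <= 1)%N.
Proof.
move=> V_le1; apply: leq_trans (card_values_le V f) _.
have [->|/fset0Pn[v0 v0V]] := eqVneq V fset0; first by rewrite cardfs0.
rewrite -(cardfs1 v0); apply/fsubset_leq_card/fsubsetP => v vV.
by rewrite inE (V_le1 _ _ vV v0V).
Qed.

(* A proper face of maximal cardinality is a facet; [zeros V 1 = fset0] is a proper face. *)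
Lemma exists_facet_fun (V : {fset T}) : V != fset0 -> Fam (fun=> 1) -> exists f, facet_fun V f.
Proof.
move=> V_n0 Fam1.
pose Q k := exists G, [/\ face V G, G != V & #|` G| = (#|` V| - k)%N].
have exQ : exists k, Q k.
  exists #|` V|, fset0; rewrite subnn cardfs0 eq_sym; split=> //.
  exists (fun=> 1); split=> //.
  by apply/fsetP => v; rewrite !inE oner_eq0 andbF.
have [[G [[f [Ff f_ge0 ->]] G_ne cardG]] minQ] := least_natP exQ.
exists f; split=> //; split=> //; first by exists f.
move=> G' faceG' G'_ne sub; have G'_le : (#|` G'| <= #|` V|)%N.
  by case: faceG' => f' [_ _ ->]; apply/fsubset_leq_card/zeros_sub.
have /minQ : Q (#|` V| - #|` G'|)%N by exists G'; rewrite subKn.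
move=> min_le; apply/eqP; rewrite eq_sym eqEfcard sub /=; lia.
Qed.

End Faces.

Section ProductFamily.
Variables (R : realType) (T1 T2 T : choiceType).
Variables (Fam1 : (T1 -> R) -> Prop) (Fam2 : (T2 -> R) -> Prop) (Fam : (T -> R) -> Prop).
Variable phi : T1 -> T2 -> T.

(* Axiomatizing affine functions on a product lets the statements about the second factor be
   derived from those about the first by swapping the factors. *)
Record product_family : Prop := ProductFamily {
  family_split : forall f, Fam f -> exists f1 f2,
    [/\ Fam1 f1, Fam2 f2 & forall x y, f (phi x y) = f1 x + f2 y];
  family_lift_l : forall g, Fam1 g -> exists2 f, Fam f & forall x y, f (phi x y) = g x;
  family_lift_r : forall g, Fam2 g -> exists2 f, Fam f & forall x y, f (phi x y) = g y;
  family_shift_l : forall g c, Fam1 g -> Fam1 (fun x => g x + c);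
  family_shift_r : forall g c, Fam2 g -> Fam2 (fun y => g y + c)
}.

Definition lift_on (V1 : {fset T1}) (V2 : {fset T2}) (f : T -> R) (g : T1 -> R) : Prop :=
  {in V1 & V2, forall x y, f (phi x y) = g x}.

End ProductFamily.

Lemma product_family_swap (R : realType) (T1 T2 T : choiceType) Fam1 Fam2 Fam
    (phi : T1 -> T2 -> T) :
  @product_family R _ _ _ Fam1 Fam2 Fam phi ->
  product_family Fam2 Fam1 Fam (fun y x => phi x y).
Proof.
case=> split_f lift_l lift_r shift_l shift_r; split=> //.
- move=> f /split_f[f1 [f2 [F1 F2 fE]]].
  by exists f2, f1; split=> // y x; rewrite fE addrC.
- by move=> g /lift_r[f Ff fE]; exists f.
- by move=> g /lift_l[f Ff fE]; exists f.
Qed.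

Section LiftedFacets.
Variables (R : realType) (T1 T2 T : choiceType).
Variables (Fam1 : (T1 -> R) -> Prop) (Fam2 : (T2 -> R) -> Prop) (Fam : (T -> R) -> Prop).
Variable phi : T1 -> T2 -> T.
Hypothesis famP : product_family Fam1 Fam2 Fam phi.
Variables (V1 : {fset T1}) (V2 : {fset T2}).
Hypothesis V2_n0 : V2 != fset0.
Local Open Scope fset_scope.
Local Open Scope ring_scope.
Local Notation P := (fprod phi V1 V2).
Local Notation lift_on := (lift_on phi V1 V2).
Implicit Types (f h : T -> R) (g : T1 -> R).

Lemma nonneg_lift f g : lift_on f g -> nonneg P f <-> nonneg V1 g.
Proof.
move=> fg; have [y0 y0V] := fset0Pn _ V2_n0.
split=> [f_ge0 x xV|g_ge0 _ /fprodP[x [y [xV yV ->]]]]; last by rewrite fg ?g_ge0.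
by rewrite -(fg x y0) ?f_ge0 ?mem_fprod.
Qed.

Lemma mem_zeros_lift f g x y : lift_on f g -> x \in V1 -> y \in V2 ->
  (phi x y \in zeros P f) = (x \in zeros V1 g).
Proof.
move=> fg xV yV; apply/zerosP/zerosP => [[_]|[_ gx]]; rewrite fg //.
by rewrite mem_fprod.
Qed.

Lemma zeros_lift_subset f g f' g' : lift_on f g -> lift_on f' g' ->
  (zeros P f `<=` zeros P f') = (zeros V1 g `<=` zeros V1 g').
Proof.
move=> fg f'g'; have [y0 y0V] := fset0Pn _ V2_n0.
apply/fsubsetP/fsubsetP => [sub x xg|sub _ /[dup] /zerosP[/fprodP[x [y [xV yV ->]]] _]].
  have xV : x \in V1 by case/zerosP: xg.
  by rewrite -(mem_zeros_lift f'g' xV y0V) sub ?(mem_zeros_lift fg).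
by rewrite (mem_zeros_lift fg xV yV) (mem_zeros_lift f'g' xV yV); apply: sub.
Qed.

Lemma zeros_lift_eqT f g : lift_on f g -> (zeros P f == P) = (zeros V1 g == V1).
Proof. by move=> fg; rewrite !zeros_eqT (zeros_lift_subset (g := fun=> 0) _ fg). Qed.

Lemma lift_on_descend h x0 : Fam h -> x0 \in V1 ->
  {in V2, forall y, h (phi x0 y) = 0} -> exists2 g, Fam1 g & lift_on h g.
Proof.
move=> Fh x0V h_fiber; have [h1 [h2 [F1 _ hE]]] := family_split famP Fh.
exists (fun x => h1 x + - h1 x0); first exact: (family_shift_l famP _ F1).
move=> x y xV yV /=; rewrite hE; congr (_ + _).
by apply/eqP; rewrite -addr_eq0 addrC -hE h_fiber.
Qed.

Lemma lift_facetE f g : Fam f -> Fam1 g -> lift_on f g -> zeros V1 g != fset0 ->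
  facet_fun Fam P f <-> facet_fun Fam1 V1 g.
Proof.
move=> Ff Fg fg /fset0Pn[x0 /[dup] x0g /zerosP[x0V _]].
have face_lift h g' : Fam h -> lift_on h g' -> nonneg V1 g' -> face Fam P (zeros P h).
  by move=> Fh hg' g'_ge0; exists h; split=> //; apply/(nonneg_lift hg').
split=> [[_ f_ge0 [_ Zf_ne maxf]]|[_ g_ge0 [_ Zg_ne maxg]]].
  have g_ge0 := (nonneg_lift fg).1 f_ge0.
  split=> //; split; [by exists g | by rewrite -(zeros_lift_eqT fg) |].
  move=> _ [g' [Fg' g'_ge0 ->]] Zg'_ne sub.
  have [h Fh hg'] := family_lift_l famP Fg'; have hg'V : lift_on h g' := fun x y _ _ => hg' x y.
  have Zh : zeros P h = zeros P f.
    apply: maxf; first exact: face_lift Fh hg'V g'_ge0.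
      by rewrite (zeros_lift_eqT hg'V).
    by rewrite (zeros_lift_subset fg hg'V).
  by apply/eqP; rewrite eqEfsubset sub -(zeros_lift_subset hg'V fg) Zh fsubset_refl.
have f_ge0 := (nonneg_lift fg).2 g_ge0.
split=> //; split; [by exists f | by rewrite (zeros_lift_eqT fg) |].
move=> _ [h [Fh h_ge0 ->]] Zh_ne sub.
have [g' Fg' hg'] : exists2 g', Fam1 g' & lift_on h g'.
  apply: (lift_on_descend Fh x0V) => y yV.
  have : phi x0 y \in zeros P h by apply: (fsubsetP sub); rewrite (mem_zeros_lift fg).
  by case/zerosP.
have Zg' : zeros V1 g' = zeros V1 g.
  apply: maxg; first by exists g'; split=> //; apply/(nonneg_lift hg').
    by rewrite -(zeros_lift_eqT hg').
  by rewrite -(zeros_lift_subset fg hg').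
by apply/eqP; rewrite eqEfsubset sub (zeros_lift_subset hg' fg) Zg' fsubset_refl.
Qed.

Lemma values_lift f g : lift_on f g -> values P f = values V1 g.
Proof.
move=> fg; have [y0 y0V] := fset0Pn _ V2_n0.
apply/fsetP => r; apply/imfsetP/imfsetP => [[_ /fprodP[x [y [xV yV ->]]] ->]|[x xV ->]].
  by exists x; rewrite ?fg.
by exists (phi x y0); rewrite ?fg ?mem_fprod.
Qed.

Lemma facet_fun_lift g : facet_fun Fam1 V1 g -> zeros V1 g != fset0 ->
  exists2 f, facet_fun Fam P f & values P f = values V1 g.
Proof.
move=> facet_g Zg_n0; have [Fg _ _] := facet_g.
have [f Ff fg] := family_lift_l famP Fg; have fgV : lift_on f g := fun x y _ _ => fg x y.
by exists f; [apply/(lift_facetE Ff Fg fgV Zg_n0) | apply: values_lift].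
Qed.

End LiftedFacets.

Section ProductFacets.
Variables (R : realType) (T1 T2 T : choiceType).
Variables (Fam1 : (T1 -> R) -> Prop) (Fam2 : (T2 -> R) -> Prop) (Fam : (T -> R) -> Prop).
Variable phi : T1 -> T2 -> T.
Hypothesis famP : product_family Fam1 Fam2 Fam phi.
Variables (V1 : {fset T1}) (V2 : {fset T2}).
Local Open Scope fset_scope.
Local Open Scope ring_scope.
Local Notation P := (fprod phi V1 V2).
Implicit Types (f h : T -> R) (g : T1 -> R).

Local Notation lift_on_r f g := {in V1 & V2, forall x y, f (phi x y) = g y}.

Lemma lift_facetE_r f (g : T2 -> R) : V1 != fset0 -> Fam f -> Fam2 g -> lift_on_r f g ->
  zeros V2 g != fset0 -> facet_fun Fam P f <-> facet_fun Fam2 V2 g.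
Proof.
move=> V1_n0 Ff Fg fg; rewrite -fprod_swap.
by apply: (lift_facetE (product_family_swap famP) V1_n0 Ff Fg) => y x yV xV; apply: fg.
Qed.

Lemma values_lift_r f (g : T2 -> R) : V1 != fset0 -> lift_on_r f g ->
  values P f = values V2 g.
Proof.
move=> V1_n0 fg; rewrite -fprod_swap.
by apply: (values_lift V1_n0) => y x yV xV; apply: fg.
Qed.

Lemma facet_fun_lift_r (g : T2 -> R) : V1 != fset0 ->
  facet_fun Fam2 V2 g -> zeros V2 g != fset0 ->
  exists2 f, facet_fun Fam P f & values P f = values V2 g.
Proof.
by move=> V1_n0; rewrite -fprod_swap; apply: (facet_fun_lift (product_family_swap famP) V1_n0).
Qed.

(* Normalized at a zero [(x0, y0)] of [f], the decomposition [f = g1 + g2] has nonnegative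
   summands. Either [g1] vanishes on [V1], or it cuts out a proper face containing [zeros P f],
   which then equals [zeros P f] by maximality and forces [g2] to vanish on [V2]. *)
Lemma facet_fun_prod f : facet_fun Fam P f -> zeros P f != fset0 ->
  (exists2 g, facet_fun Fam1 V1 g & values P f = values V1 g) \/
  (exists2 g : T2 -> R, facet_fun Fam2 V2 g & values P f = values V2 g).
Proof.
move=> facet_f /fset0Pn[_ /zerosP[/fprodP[x0 [y0 [x0V y0V ->]]] f0]].
have [Ff f_ge0 [_ _ maxf]] := facet_f.
have [f1 [f2 [F1 F2 fE]]] := family_split famP Ff.
pose g1 x := f1 x + f2 y0; pose g2 y := f2 y + f1 x0.
have g1E x : g1 x = f (phi x y0) by rewrite fE.
have g2E y : g2 y = f (phi x0 y) by rewrite fE addrC.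
have fg x y : f (phi x y) = g1 x + g2 y.
  by move: f0; rewrite /g1 /g2 !fE; lra.
have g1_ge0 : nonneg V1 g1 by move=> x xV; rewrite g1E f_ge0 ?mem_fprod.
have g2_ge0 : nonneg V2 g2 by move=> y yV; rewrite g2E f_ge0 ?mem_fprod.
have V1_n0 : V1 != fset0 by apply/fset0Pn; exists x0.
have V2_n0 : V2 != fset0 by apply/fset0Pn; exists y0.
have x0Z : x0 \in zeros V1 g1 by apply/zerosP; rewrite g1E.
have y0Z : y0 \in zeros V2 g2 by apply/zerosP; rewrite g2E.
have [Z1|Z1_ne] := eqVneq (zeros V1 g1) V1.
  have fg2 : lift_on_r f g2.
    move=> x y xV _; rewrite fg.
    have /zerosP[_ ->] : x \in zeros V1 g1 by rewrite Z1.
    by rewrite add0r.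
  have Z2_n0 : zeros V2 g2 != fset0 by apply/fset0Pn; exists y0.
  right; exists g2; last exact: values_lift_r.
  exact/(lift_facetE_r V1_n0 Ff (family_shift_r famP _ F2) fg2 Z2_n0).
left; have [h Fh hg1] := family_lift_l famP (family_shift_l famP (f2 y0) F1).
have hg1V : lift_on phi V1 V2 h g1 := fun x y _ _ => hg1 x y.
have Zh : zeros P h = zeros P f.
  apply: maxf; first by exists h; split=> //; apply/(nonneg_lift V2_n0 hg1V).
    by rewrite (zeros_lift_eqT V2_n0 hg1V).
  apply/fsubsetP => z /zerosP[zP]; case/fprodP: (zP) => x [y [xV yV zxy]].
  rewrite zxy fg => /eqP; rewrite paddr_eq0 ?g1_ge0 ?g2_ge0 // => /andP[/eqP g1x _].
  by apply/zerosP; split; [rewrite -zxy | rewrite hg1].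
have fg1 : lift_on phi V1 V2 f g1.
  move=> x y xV yV; rewrite fg; suff -> : g2 y = 0 by rewrite addr0.
  have : phi x0 y \in zeros P f by rewrite -Zh (mem_zeros_lift hg1V).
  by case/zerosP; rewrite g2E.
have Z1_n0 : zeros V1 g1 != fset0 by apply/fset0Pn; exists x0.
exists g1; last exact: values_lift.
exact/(lift_facetE famP V2_n0 Ff (family_shift_l famP _ F1) fg1 Z1_n0).
Qed.

End ProductFacets.

Section Levelness.
Variable R : realType.
Local Open Scope fset_scope.
Local Open Scope ring_scope.

Definition affine n (f : 'rV[R]_n -> R) : Prop := exists delta c, f =1 Defs.linfun delta c.

Lemma face_affineE n (V : pconf R n) G : is_face V G <-> face (@affine n) V G.
Proof.
split=> [[delta [c [c_ge0 ->]]]|[f [[delta [c fE]] f_ge0 ->]]].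
  by exists (Defs.linfun delta c); split=> //; exists delta, c.
exists delta, c; split=> [v vV|]; first by rewrite -fE f_ge0.
by apply/fsetP => v; rewrite !inE fE.
Qed.

Lemma facet_affineE n (V : pconf R n) G : is_facet V G <-> facet (@affine n) V G.
Proof.
split=> -[faceG G_ne maxG]; split=> //.
- exact/face_affineE.
- by move=> G' /face_affineE; apply: maxG.
- exact/face_affineE.
- by move=> G' /face_affineE; apply: maxG.
Qed.

Lemma k_levelE n (V : pconf R n) k :
  k_level V k <-> forall f, facet_fun (@affine n) V f -> (#|` values V f| <= k)%N.
Proof.
have valuesE (f g : 'rV[R]_n -> R) : f =1 g -> values V f = values V g.
  by move=> fg; apply/fsetP => r; apply/imfsetP/imfsetP => -[v vV ->]; exists v.
have zerosE (f g : 'rV[R]_n -> R) : f =1 g -> zeros V f = zeros V g.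
  by move=> fg; apply/fsetP => v; rewrite !inE fg.
split=> [lev f [[delta [c fE]] f_ge0 facetZ]|lev delta c [c_ge0 facetZ]].
  rewrite (valuesE _ _ fE); apply: lev; split=> [v vV|]; first by rewrite -fE f_ge0.
  by apply/facet_affineE; rewrite (zerosE _ _ fE) in facetZ.
by apply: lev; split=> //; [exists delta, c | apply/facet_affineE].
Qed.

Lemma affine_product d1 d2 :
  product_family (@affine d1) (@affine d2) (@affine (d1 + d2)) (@row_mx R 1 d1 d2).
Proof.
split.
- move=> f [delta [c fE]]; exists (Defs.linfun delta (lsubmx c)), (Defs.linfun 0 (rsubmx c)).
  split; [by exists delta, (lsubmx c) | by exists 0, (rsubmx c) |].
  by move=> x y; rewrite fE -{1}(hsubmxK c) linfun_row_mx.
- move=> g [delta [c gE]].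
  exists (Defs.linfun delta (row_mx c 0)); first by exists delta, (row_mx c 0).
  by move=> x y; rewrite gE linfun_row_mx linfun0 addr0.
- move=> g [delta [c gE]].
  exists (Defs.linfun delta (row_mx 0 c)); first by exists delta, (row_mx 0 c).
  by move=> x y; rewrite gE linfun_row_mx (linfunE delta 0) linfun0 addr0 -linfunE.
- move=> g a [delta [c gE]]; exists (delta + a), c => x.
  by rewrite gE (linfunE delta) (linfunE (delta + a)) addrAC.
- move=> g a [delta [c gE]]; exists (delta + a), c => x.
  by rewrite gE (linfunE delta) (linfunE (delta + a)) addrAC.
Qed.

Lemma linfun_sub_neq n (u w : 'rV[R]_n) :
  u != w -> Defs.linfun 0 (u - w) u != Defs.linfun 0 (u - w) w.
Proof.
move=> uw; apply: contra uw => /eqP same; rewrite -subr_eq0; apply/eqP/rowP => i.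
have sum_sq0 : \sum_(j < n) (u - w) 0 j ^+ 2 = 0.
  move: same; rewrite /Defs.linfun !sub0r => /oppr_inj/eqP; rewrite -subr_eq0 -sumrB.
  move/eqP => sum0; rewrite -[RHS]sum0; apply: eq_bigr => j _.
  by rewrite expr2 -mulrBr !mxE.
rewrite [RHS]mxE; apply/eqP; rewrite -sqrf_eq0; apply/eqP.
by apply: (psumr_eq0P _ sum_sq0) => // j _; apply: sqr_ge0.
Qed.

(* If the empty set is a facet then it is the only proper face, but any two distinct points
   [u], [w] are separated by the proper nonempty face where [<u - w, .>] is maximal. *)
Lemma facet0_le1 n (V : pconf R n) : facet (@affine n) V fset0 -> {in V &, forall u w, u = w}.
Proof.
move=> [_ _ max0] u w uV wV; apply/eqP; apply: contraT => uw.
have [|x0 x0V min_x0] := fset_argmin (Defs.linfun 0 (u - w)) (V := V).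
  by apply/fset0Pn; exists u.
pose f := Defs.linfun (- Defs.linfun 0 (u - w) x0) (u - w).
have f_ge0 : nonneg V f by move=> x xV; rewrite /f linfunE addrC subr_ge0 min_x0.
have Zf_ne : zeros V f != V.
  apply: contra (linfun_sub_neq uw) => /eqP ZfV.
  have /zerosP[_] : u \in zeros V f by rewrite ZfV.
  have /zerosP[_] : w \in zeros V f by rewrite ZfV.
  by rewrite /f !(linfunE (- _)) => fw fu; apply/eqP; lra.
have Zf0 : zeros V f = fset0.
  apply: max0 (fsub0set _) => //.
  by exists f; split=> //; exists (- Defs.linfun 0 (u - w) x0), (u - w).
have : x0 \in zeros V f by apply/zerosP; rewrite /f linfunE addNr.
by rewrite Zf0 in_fset0.
Qed.

Lemma k_level_card n (V : pconf R n) : k_level V #|` V|.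
Proof. by apply/k_levelE => f _; apply: card_values_le. Qed.

Lemma k_level_gt0 n (V : pconf R n) k : V != fset0 -> k_level V k -> (0 < k)%N.
Proof.
move=> V_n0 /k_levelE lev.
have [|f facet_f] := exists_facet_fun (Fam := @affine n) V_n0.
  by exists 1, 0 => x; rewrite linfunE linfun0 addr0.
by apply: leq_trans (lev f facet_f); rewrite cardfs_gt0 values_eq0.
Qed.

Lemma facet_fun_values_le1 n (V : pconf R n) f :
  facet_fun (@affine n) V f -> zeros V f = fset0 -> (#|` values V f| <= 1)%N.
Proof. by move=> [_ _ facetZ] Z0; rewrite Z0 in facetZ; apply/card_values_le1/facet0_le1. Qed.

Variables (d1 d2 : nat) (V1 : pconf R d1) (V2 : pconf R d2).
Hypotheses (V1_n0 : V1 != fset0) (V2_n0 : V2 != fset0).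
Local Notation P := (prod_conf V1 V2).

Lemma prod_conf_n0 : P != fset0.
Proof.
case/fset0Pn: V1_n0 => x xV; case/fset0Pn: V2_n0 => y yV.
by apply/fset0Pn; exists (row_mx x y); apply: mem_fprod.
Qed.

Lemma k_level_prod k1 k2 : k_level V1 k1 -> k_level V2 k2 -> k_level P (maxn k1 k2).
Proof.
move=> lev1 lev2; apply/k_levelE => f facet_f.
have [Z0|Z_n0] := eqVneq (zeros P f) fset0.
  apply: leq_trans (facet_fun_values_le1 facet_f Z0) (leq_trans _ (leq_maxl _ _)).
  exact: k_level_gt0 V1_n0 lev1.
move/k_levelE: lev1 => lev1; move/k_levelE: lev2 => lev2.
have [[g facet_g ->]|[g facet_g ->]] := facet_fun_prod (affine_product d1 d2) facet_f Z_n0.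
  exact: leq_trans (lev1 _ facet_g) (leq_maxl _ _).
exact: leq_trans (lev2 _ facet_g) (leq_maxr _ _).
Qed.

Lemma k_level_prod_l k : k_level P k -> k_level V1 k.
Proof.
move=> levP; apply/k_levelE => g facet_g.
have [Z0|Z_n0] := eqVneq (zeros V1 g) fset0.
  exact: leq_trans (facet_fun_values_le1 facet_g Z0) (k_level_gt0 prod_conf_n0 levP).
have [f facet_f <-] := facet_fun_lift (affine_product d1 d2) V2_n0 facet_g Z_n0.
exact: (k_levelE _ _).1 levP f facet_f.
Qed.

Lemma k_level_prod_r k : k_level P k -> k_level V2 k.
Proof.
move=> levP; apply/k_levelE => g facet_g.
have [Z0|Z_n0] := eqVneq (zeros V2 g) fset0.
  exact: leq_trans (facet_fun_values_le1 facet_g Z0) (k_level_gt0 prod_conf_n0 levP).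
have [f facet_f <-] := facet_fun_lift_r (affine_product d1 d2) V1_n0 facet_g Z_n0.
exact: (k_levelE _ _).1 levP f facet_f.
Qed.

Lemma levelness_prod : levelness P = maxn (levelness V1) (levelness V2).
Proof.
have [lev1 min1] := least_natP (ex_intro _ _ (k_level_card (V := V1))).
have [lev2 min2] := least_natP (ex_intro _ _ (k_level_card (V := V2))).
apply: least_nat_eq; first exact: k_level_prod.
move=> j levP; rewrite geq_max min1 ?min2 //.
  exact: k_level_prod_r levP.
exact: k_level_prod_l levP.
Qed.

End Levelness.

Theorem proposition2p2 (R : realType) (d1 d2 : nat)
    (V1 : pconf R d1) (V2 : pconf R d2) :
  V1 != fset0 -> V2 != fset0 ->
  theta_rank (prod_conf V1 V2) = maxn (theta_rank V1) (theta_rank V2) /\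
  levelness (prod_conf V1 V2) = maxn (levelness V1) (levelness V2).
Proof. by move=> V1_n0 V2_n0; split; [exact: theta_rank_prod | exact: levelness_prod]. Qed.
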